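(* Let $\mathcal D$ be a geometric category in which every admissible morphism is a monomorphism, and let $f\colon\mathcal C\to\mathcal D$ be an admissibility fibration. Call a morphism of $\mathcal C$ admissible if it is $f$-cartesian and its image under $f$ is admissible. Then for every $c\in\mathcal C$, $f$ establishes a bijection from the poset of admissible subobjects of $c$ to the poset of admissible subobjects of $d=f(c)$ (sending the subobject represented by $r\colon c_1\to c$ to the one represented by $f(r)$).
   Context: An admissibility structure on a category is a subcategory containing all identities whose morphisms (called admissible) are closed under retracts, satisfy: if $g$ and $g\circ f$ are admissible then $f$ is, and whose base changes along arbitrary morphisms exist and are admissible; a geometric category is a category with an admissibility structure. A functor $f\colon\mathcal C\to\mathcal D$ to a geometric category is an admissibility fibration if for each $y\in\mathcal C$ and admissible $b\colon z\to f(y)$ there exists an $f$-cartesian $a\colon x\to y$ with $f(a)=b$. An admissible subobject of an object is a subobject represented by an admissible monomorphism into it, ordered by factorization. *)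

Set Implicit Arguments.
Unset Strict Implicit.

Record Category := {
  Obj :> Type;
  Hom : Obj -> Obj -> Type;
  idm : forall x, Hom x x;
  comp : forall x y z, Hom y z -> Hom x y -> Hom x z;
  comp_assoc : forall x y z w (h : Hom z w) (g : Hom y z) (f : Hom x y),
      comp h (comp g f) = comp (comp h g) f;
  comp_id_l : forall x y (f : Hom x y), comp (idm y) f = f;
  comp_id_r : forall x y (f : Hom x y), comp f (idm x) = f
}.

Arguments Hom {c} _ _.
Arguments idm {c} _.
Arguments comp {c x y z} _ _.

Record Functor (C D : Category) := {
  Fobj :> C -> D;
  Fhom : forall x y : C, Hom x y -> Hom (Fobj x) (Fobj y);
  F_id : forall x : C, Fhom (idm x) = idm (Fobj x);
  F_comp : forall (x y z : C) (g : Hom y z) (f : Hom x y),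
      Fhom (comp g f) = comp (Fhom g) (Fhom f)
}.

Arguments Fhom {C D} _ {x y} _.

Section Defs.
Variable C : Category.

Definition mono (x y : C) (m : Hom x y) : Prop :=
  forall (w : C) (g h : Hom w x), comp m g = comp m h -> g = h.

Definition retract_of (a b a' b' : C) (f : Hom a b) (g : Hom a' b') : Prop :=
  exists (i0 : Hom a a') (i1 : Hom b b') (r0 : Hom a' a) (r1 : Hom b' b),
    comp g i0 = comp i1 f /\ comp f r0 = comp r1 g /\
    comp r0 i0 = idm a /\ comp r1 i1 = idm b.

Definition is_pullback (x y z w : C) (p : Hom x y) (g : Hom z y)
    (p' : Hom w z) (q' : Hom w x) : Prop :=
  comp p q' = comp g p' /\
  forall (t : C) (u : Hom t z) (v : Hom t x), comp g u = comp p v ->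
    exists h : Hom t w, (comp p' h = u /\ comp q' h = v) /\
      forall h' : Hom t w, comp p' h' = u /\ comp q' h' = v -> h' = h.

Record AdmStructure := {
  adm : forall x y : C, Hom x y -> Prop;
  adm_id : forall x : C, adm (idm x);
  adm_comp : forall (x y z : C) (g : Hom y z) (f : Hom x y),
      adm g -> adm f -> adm (comp g f);
  adm_retract : forall (a b a' b' : C) (f : Hom a b) (g : Hom a' b'),
      retract_of f g -> adm g -> adm f;
  adm_cancel : forall (x y z : C) (g : Hom y z) (f : Hom x y),
      adm g -> adm (comp g f) -> adm f;
  adm_base_change : forall (x y z : C) (p : Hom x y) (g : Hom z y),
      adm p -> exists (w : C) (p' : Hom w z) (q' : Hom w x),
        is_pullback p g p' q' /\ adm p'
}.

End Defs.

Arguments adm {C} _ {x y} _.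

Record GeometricCategory := {
  gcat :> Category;
  gadm : AdmStructure gcat
}.

Section Fib.
Variables (C : Category) (D : GeometricCategory) (F : Functor C D).

Definition cartesian (x y : C) (a : Hom x y) : Prop :=
  forall (z : C) (h : Hom z y) (u : Hom (F z) (F x)),
    comp (Fhom F a) u = Fhom F h ->
    exists v : Hom z x, (comp a v = h /\ Fhom F v = u) /\
      forall v' : Hom z x, comp a v' = h /\ Fhom F v' = u -> v' = v.

(* f(a) = b as arrows into f(y) (the domains must agree as well) *)
Definition admissibility_fibration : Prop :=
  forall (y : C) (z : D) (b : Hom z (F y)), adm (gadm D) b ->
    exists (x : C) (a : Hom x y), cartesian a /\
      existT (fun s : D => Hom s (F y)) (F x) (Fhom F a)
      = existT (fun s : D => Hom s (F y)) z b.

Definition admC (x y : C) (a : Hom x y) : Prop :=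
  cartesian a /\ adm (gadm D) (Fhom F a).

End Fib.

(* Admissible subobjects: representatives are admissible monomorphisms into c,
   preordered by factorization; subobjects are classes under mutual factorization. *)
Definition sub_le (C : Category) (c x x' : C) (r : Hom x c) (r' : Hom x' c) : Prop :=
  exists g : Hom x x', comp r' g = r.

Definition sub_eq (C : Category) (c x x' : C) (r : Hom x c) (r' : Hom x' c) : Prop :=
  sub_le r r' /\ sub_le r' r.

Definition adm_mono_D (D : GeometricCategory) (d x : D) (s : Hom x d) : Prop :=
  adm (gadm D) s /\ mono s.

Definition adm_mono_C (C : Category) (D : GeometricCategory) (F : Functor C D)
    (c x : C) (r : Hom x c) : Prop :=
  admC F r /\ mono r.

Definition induces_subobject_bijection (C : Category) (D : GeometricCategory)
    (F : Functor C D) (c : C) : Prop :=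
  (forall (x : C) (r : Hom x c), adm_mono_C F r -> adm_mono_D (Fhom F r)) /\
  (forall (x x' : C) (r : Hom x c) (r' : Hom x' c),
      adm_mono_C F r -> adm_mono_C F r' ->
      sub_eq r r' -> sub_eq (Fhom F r) (Fhom F r')) /\
  (forall (x x' : C) (r : Hom x c) (r' : Hom x' c),
      adm_mono_C F r -> adm_mono_C F r' ->
      sub_eq (Fhom F r) (Fhom F r') -> sub_eq r r') /\
  (forall (z : D) (s : Hom z (F c)), adm_mono_D s ->
      exists (x : C) (r : Hom x c), adm_mono_C F r /\ sub_eq (Fhom F r) s).


(* A functor preserves factorizations of arrows into [c], and a cartesian arrow
   reflects them: a factorization of [F r] through [F r'] lifts along
   a cartesian [r'].  Hence [r |-> F r] is well defined and injective on
   admissible subobjects.  For surjectivity, a cartesian lift [a] of an admissible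
   mono [s] exists by the fibration property; [F a] is mono because admissible
   arrows of [D] are, and a cartesian arrow over a mono is itself mono. *)

Lemma transport_existT {A : Type} {B : A -> Type} (P : forall a, B a -> Prop)
    {a a' : A} {b : B a} {b' : B a'} :
  existT B a b = existT B a' b' -> P a' b' -> P a b.
Proof.
  intros E H.
  change (P (projT1 (existT B a b)) (projT2 (existT B a b))).
  rewrite E. exact H.
Qed.

Set Implicit Arguments.
Unset Strict Implicit.

Section CartesianSubobjects.
Variables (C : Category) (D : GeometricCategory) (F : Functor C D).

Lemma Fhom_sub_le (c x x' : C) (r : Hom x c) (r' : Hom x' c) :
  sub_le r r' -> sub_le (Fhom F r) (Fhom F r').
Proof.
  intros [g Hg]. exists (Fhom F g).
  rewrite <- F_comp, Hg. reflexivity.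
Qed.

Lemma Fhom_sub_eq (c x x' : C) (r : Hom x c) (r' : Hom x' c) :
  sub_eq r r' -> sub_eq (Fhom F r) (Fhom F r').
Proof.
  intros [Hle Hge]. split; apply Fhom_sub_le; assumption.
Qed.

Lemma cartesian_sub_le (c x x' : C) (r : Hom x c) (r' : Hom x' c) :
  cartesian F r' -> sub_le (Fhom F r) (Fhom F r') -> sub_le r r'.
Proof.
  intros Hcart [u Hu].
  destruct (Hcart x r u Hu) as [v [[Hv _] _]].
  exists v. exact Hv.
Qed.

Lemma cartesian_sub_eq (c x x' : C) (r : Hom x c) (r' : Hom x' c) :
  cartesian F r -> cartesian F r' ->
  sub_eq (Fhom F r) (Fhom F r') -> sub_eq r r'.
Proof.
  intros Hcart Hcart' [Hle Hge].
  split; eapply cartesian_sub_le; eassumption.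
Qed.

Lemma cartesian_mono (x y : C) (a : Hom x y) :
  cartesian F a -> mono (Fhom F a) -> mono a.
Proof.
  intros Hcart Hmono w g h Hgh.
  assert (HFgh : Fhom F g = Fhom F h).
  { apply Hmono. rewrite <- !F_comp, Hgh. reflexivity. }
  (* both [g] and [h] are the unique lift of [F g] through [a] *)
  destruct (Hcart w (comp a g) (Fhom F g) (eq_sym (F_comp F a g)))
    as [v [_ Hunique]].
  rewrite (Hunique g (conj eq_refl eq_refl)).
  symmetry. apply Hunique. split; symmetry; assumption.
Qed.

Lemma fibration_lift_sub_eq (y : C) (z : D) (b : Hom z (F y)) :
  admissibility_fibration F -> adm (gadm D) b ->
  exists (x : C) (a : Hom x y), admC F a /\ sub_eq (Fhom F a) b.
Proof.
  intros Hfib Hb.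
  destruct (Hfib y z b Hb) as [x [a [Hcart E]]].
  exists x, a. split; [split|].
  - exact Hcart.
  - exact (transport_existT (fun w (t : Hom w (F y)) => adm (gadm D) t) E Hb).
  - apply (transport_existT (fun w (t : Hom w (F y)) => sub_eq t b) E).
    split; exists (idm z); apply comp_id_r.
Qed.

End CartesianSubobjects.

Theorem proposition4p1p11 :
  forall (C : Category) (D : GeometricCategory) (F : Functor C D),
    (forall (x y : D) (m : Hom x y), adm (gadm D) m -> mono m) ->
    admissibility_fibration F ->
    forall c : C, induces_subobject_bijection F c.
Proof.
  intros C D F Hmono Hfib c.
  split; [|split; [|split]].
  - intros x r [[_ Hadm] _]. split; [exact Hadm | exact (Hmono _ _ _ Hadm)].
  - intros x x' r r' _ _. apply Fhom_sub_eq.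
  - intros x x' r r' [[Hcart _] _] [[Hcart' _] _].
    apply cartesian_sub_eq; assumption.
  - intros z s [Hs _].
    destruct (fibration_lift_sub_eq Hfib Hs) as [x [a [[Hcart Hadm] Hseq]]].
    exists x, a. split; [|exact Hseq].
    split; [split; assumption|].
    exact (cartesian_mono Hcart (Hmono _ _ _ Hadm)).
Qed.
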